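(* Let $A$ be a ring satisfying the ascending chain condition on semiprime ideals, and let $\varphi: A \to A$ be a surjective ring endomorphism. Then $\ker\varphi$ is contained in the prime radical of $A$.
   Context: The prime radical of $A$ is the intersection of all prime ideals of $A$. For an ideal $J \triangleleft A$, $\sqrt{J}$ is the intersection of the prime ideals containing $J$; $J$ is \emph{semiprime} if $\sqrt J = J$. *)

From HB Require Import structures.
From mathcomp Require Import all_boot all_order all_algebra.
Set Implicit Arguments. Unset Strict Implicit. Unset Printing Implicit Defensive.
Import GRing.Theory.
Local Open Scope ring_scope.

Section RingIdeals.
Variable R : pzRingType.

Definition is_ideal (I : R -> Prop) : Prop :=
  [/\ I 0,
      (forall x y, I x -> I y -> I (x + y)),
      (forall x, I x -> I (- x)),
      (forall r x, I x -> I (r * x)) &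
      (forall r x, I x -> I (x * r))].

Definition subideal (I J : R -> Prop) : Prop := forall x, I x -> J x.

(* I J ⊆ P  (the product ideal IJ is generated additively by products a*b). *)
Definition prod_sub (I J P : R -> Prop) : Prop :=
  forall a b, I a -> J b -> P (a * b).

Definition prime_ideal (P : R -> Prop) : Prop :=
  [/\ is_ideal P, (exists x, ~ P x) &
      (forall I J, is_ideal I -> is_ideal J -> prod_sub I J P ->
         subideal I P \/ subideal J P)].

Definition prime_radical (x : R) : Prop :=
  forall P, prime_ideal P -> P x.

Definition rad (J : R -> Prop) (x : R) : Prop :=
  forall P, prime_ideal P -> subideal J P -> P x.

Definition semiprime (J : R -> Prop) : Prop :=
  is_ideal J /\ (forall x, rad J x <-> J x).

Definition acc_semiprime : Prop :=
  forall I : nat -> R -> Prop,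
    (forall n, semiprime (I n)) ->
    (forall n, subideal (I n) (I n.+1)) ->
    exists N, forall n, (N <= n)%N -> forall x, I n x <-> I N x.

End RingIdeals.

(* Let phi^n denote the iterates of phi and K_n = sqrt(ker phi^n).  These form an
   ascending chain of semiprime ideals, so K_(N+1) = K_N for some N.  Given x in
   ker phi and a prime P, write x = phi^N y by surjectivity.  Then phi^(N+1) y = 0,
   so y lies in K_(N+1) = K_N; since the preimage of P under the surjection phi^N is
   a prime containing ker phi^N, it contains y, i.e. P contains x. *)
From Pilot Require Import Defs.
From HB Require Import structures.
From mathcomp Require Import all_boot all_order all_algebra.
Set Implicit Arguments. Unset Strict Implicit. Unset Printing Implicit Defensive.
Import GRing.Theory.
Local Open Scope ring_scope.

Section Radical.
Variable R : pzRingType.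

Lemma rad_ideal (J : R -> Prop) : is_ideal (Defs.rad J).
Proof.
split=> [P [[P0 _ _ _ _] _ _] _ //|x y Jx Jy|x Jx|r x Jx|r x Jx] P HP JP;
  have [[_ PD PN PL PR] _ _] := HP.
- by apply: PD; [apply: Jx | apply: Jy].
- by apply: PN; apply: Jx.
- by apply: PL; apply: Jx.
- by apply: PR; apply: Jx.
Qed.

Lemma sub_rad (J : R -> Prop) : subideal J (Defs.rad J).
Proof. by move=> x Jx P _; apply. Qed.

Lemma rad_semiprime (J : R -> Prop) : semiprime (Defs.rad J).
Proof.
split=> [|x]; first exact: rad_ideal.
by split=> [radJx P HP JP|]; [apply: radJx => // y; apply|apply: sub_rad].
Qed.

Lemma rad_mono (J K : R -> Prop) : subideal J K -> subideal (Defs.rad J) (Defs.rad K).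
Proof. by move=> JK x radJx P HP KP; apply: radJx => // y /JK /KP. Qed.

End Radical.

Section Preimage.
Variables (A B : pzRingType) (f : {rmorphism A -> B}).

Definition kernel : A -> Prop := fun x => f x = 0.

Lemma preim_ideal (J : B -> Prop) : is_ideal J -> is_ideal (fun x => J (f x)).
Proof.
case=> J0 JD JN JL JR; split=> [|x y|x|r x|r x]; rewrite ?rmorph0 ?rmorphD ?rmorphN ?rmorphM //.
- exact: JD.
- exact: JN.
- exact: JL.
- exact: JR.
Qed.

Hypothesis f_surj : forall y, exists x, f x = y.

Lemma image_ideal (I : A -> Prop) :
  is_ideal I -> is_ideal (fun y => exists2 x, I x & f x = y).
Proof.
case=> I0 ID IN IL IR; split.
- by exists 0; rewrite ?rmorph0.
- by move=> _ _ [a Ia <-] [b Ib <-]; exists (a + b); rewrite ?rmorphD //; apply: ID.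
- by move=> _ [a Ia <-]; exists (- a); rewrite ?rmorphN //; apply: IN.
- move=> r _ [a Ia <-]; have [s <-] := f_surj r.
  by exists (s * a); rewrite ?rmorphM //; apply: IL.
- move=> r _ [a Ia <-]; have [s <-] := f_surj r.
  by exists (a * s); rewrite ?rmorphM //; apply: IR.
Qed.

Lemma preim_prime (P : B -> Prop) : prime_ideal P -> prime_ideal (fun x => P (f x)).
Proof.
case=> idealP [z Pz] primeP; split.
- exact: preim_ideal.
- by have [y fyz] := f_surj z; exists y; rewrite fyz.
move=> I J idealI idealJ IJP.
have [|IP|JP] := primeP _ _ (image_ideal idealI) (image_ideal idealJ).
- by move=> _ _ [a Ia <-] [b Jb <-]; rewrite -rmorphM; apply: IJP.
- by left=> x Ix; apply: IP; exists x.
- by right=> x Jx; apply: JP; exists x.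
Qed.

Lemma kernel_sub_preim_prime (P : B -> Prop) :
  prime_ideal P -> subideal kernel (fun x => P (f x)).
Proof. by case=> [[P0 _ _ _ _] _ _] x fx0; rewrite fx0. Qed.

End Preimage.

Section Iterates.
Variables (A : pzRingType) (phi : {rmorphism A -> A}).

Fixpoint rmorph_iter (n : nat) : {rmorphism A -> A} :=
  if n is n'.+1 then (phi \o rmorph_iter n' : {rmorphism A -> A})
  else (idfun : {rmorphism A -> A}).

Lemma rmorph_iterS n x : rmorph_iter n.+1 x = phi (rmorph_iter n x).
Proof. by []. Qed.

Lemma kernel_iter_mono n : subideal (kernel (rmorph_iter n)) (kernel (rmorph_iter n.+1)).
Proof. by move=> x fx0; rewrite /kernel rmorph_iterS fx0 rmorph0. Qed.

Hypothesis phi_surj : forall y, exists x, phi x = y.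

Lemma rmorph_iter_surj n y : exists x, rmorph_iter n x = y.
Proof.
elim: n y => [|n IHn] y; first by exists y.
have [z <-] := phi_surj y; have [x <-] := IHn z; by exists x.
Qed.

Lemma kernel_sub_prime_radical N :
  subideal (Defs.rad (kernel (rmorph_iter N.+1))) (Defs.rad (kernel (rmorph_iter N))) ->
  subideal (kernel phi) (@prime_radical A).
Proof.
move=> stable x phix0 P primeP.
have [y yx] := rmorph_iter_surj N x.
have radNy : Defs.rad (kernel (rmorph_iter N)) y.
  by apply: stable; apply: sub_rad; rewrite /kernel rmorph_iterS yx.
rewrite -yx; apply: (radNy (fun z => P (rmorph_iter N z))).
  exact: preim_prime (rmorph_iter_surj N) _ primeP.
exact: kernel_sub_preim_prime.
Qed.

End Iterates.

Theorem mainTheorem10 (A : pzRingType) (phi : {rmorphism A -> A}) :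
  acc_semiprime A ->
  (forall y : A, exists x : A, phi x = y) ->
  forall x : A, phi x = 0 -> prime_radical x.
Proof.
move=> acc phi_surj.
pose K n := Defs.rad (kernel (rmorph_iter phi n)).
have K_mono n : subideal (K n) (K n.+1) by apply: rad_mono; apply: kernel_iter_mono.
have [N stableN] := acc K (fun n => rad_semiprime _) K_mono.
apply: (@kernel_sub_prime_radical _ phi phi_surj N) => x.
exact: (stableN N.+1 (leqnSn N) x).1.
Qed.
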